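(* Assume $\delta=0$ (only direct learning). For all sufficiently large $n$ there exists a symmetric investment equilibrium, and along any sequence of symmetric investment equilibria $(p^*,q^* )$, $$\lim_{n\to\infty}\iota(q^*,q^* )\,n^{1/k}=(k-1)^{1/k}.$$
   Context: Model (for each number of firms $n\ge 2$). There are $n$ firms $1,\dots,n$; firm $i$ can discover a single idea, also labelled $i$. Fixed parameters (independent of $n$): an integer complexity $k\ge 2$, an indirect-learning probability $\delta\in[0,1]$, and a cost function $c:[0,1)\to[0,\infty)$ that is continuously differentiable, increasing and convex with $c(0)=0$ and $c(p)\to\infty$ as $p\to1^-$. Each firm $i$ chooses $(p_i,q_i)\in[0,1)\times[0,1]$. Idea $i$ is discovered independently with probability $p_i$; $I$ is the random set of discovered ideas. The interaction rate is $\iota(q_i,q_j)=q_iq_j$. For each ordered pair $i\neq j$, independently, $i$ learns directly from $j$ with probability $\iota(q_i,q_j)$, and conditional on this, independently with probability $\delta$, $i$ also learns indirectly through $j$. The indirect-learning network has an edge $j\to i$ whenever $i$ learns indirectly through $j$. $I_i(\mathbf p,\mathbf q)=\{j\in I\setminus\{i\}:$ some firm $m$, with $m=i$ or with a directed path from $m$ to $i$ in the indirect-learning network, learns directly from $j\}$ (when $\delta=0$ this is just the set of discovered ideas $j$ such that $i$ learns directly from $j$). A technology is a $k$-element subset $t\subseteq I$; firm $j$ knows $t$ if $t\subseteq\{j\}\cup I_j$. $PT_i$ is the set of technologies $t$ with $i\in t$ known by $i$ and by no other firm. Payoff $U_i=\mathbb E|PT_i|-c(p_i)$. An equilibrium is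 a pure-strategy Nash equilibrium; symmetric if all firms choose the same action; investment if all $p_i>0$. Sequences are indexed by $n\to\infty$. *)

From HB Require Import structures.
From mathcomp Require Import all_boot.
From Stdlib Require Import Reals.

Set Implicit Arguments.
Unset Strict Implicit.
Unset Printing Implicit Defensive.

Local Open Scope R_scope.

Lemma Rplus_assoc' : associative Rplus.
Proof. by move=> x y z; rewrite Rplus_assoc. Qed.
Lemma Rmult_assoc' : associative Rmult.
Proof. by move=> x y z; rewrite Rmult_assoc. Qed.
HB.instance Definition _ :=
  Monoid.isComLaw.Build R R0 Rplus Rplus_assoc' Rplus_comm Rplus_0_l.
HB.instance Definition _ :=
  Monoid.isComLaw.Build R R1 Rmult Rmult_assoc' Rmult_comm Rmult_1_l.

(* An elementary outcome: which ideas are discovered (d i), and for each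
   ordered pair (i,j) whether firm i learns directly from firm j (L (i,j)). *)
Definition outcome (n : nat) : finType :=
  ({ffun 'I_n -> bool} * {ffun ('I_n * 'I_n) -> bool})%type.

Definition bern (a : R) (b : bool) : R := if b then a else 1 - a.

(* The diagonal
   bits L (i,i) carry no meaning and are set to false almost surely. *)
Definition outcome_prob (n : nat) (p q : 'I_n -> R) (w : outcome n) : R :=
  \big[Rmult/R1]_(i : 'I_n) bern (p i) (w.1 i) *
  \big[Rmult/R1]_(e : ('I_n * 'I_n)%type)
     (if e.1 == e.2 then bern 0 (w.2 e) else bern (q e.1 * q e.2) (w.2 e)).

Definition discovered (n : nat) (w : outcome n) : {set 'I_n} :=
  [set j | w.1 j].

Definition learned (n : nat) (w : outcome n) (i : 'I_n) : {set 'I_n} :=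
  [set j | (j \in discovered w) && (j != i) && w.2 (i, j)].

Definition technology (n k : nat) (w : outcome n) (t : {set 'I_n}) : bool :=
  (#|t| == k)%N && (t \subset discovered w).

Definition knows (n : nat) (w : outcome n) (j : 'I_n) (t : {set 'I_n}) : bool :=
  t \subset (j |: learned w j).

Definition PT (n k : nat) (w : outcome n) (i : 'I_n) : {set {set 'I_n}} :=
  [set t | [&& technology k w t, i \in t, knows w i t &
             [forall j, (j != i) ==> ~~ knows w j t]]].

Definition expected_PT (n k : nat) (p q : 'I_n -> R) (i : 'I_n) : R :=
  \big[Rplus/R0]_(w : outcome n) (outcome_prob p q w * INR #|PT k w i|).

Definition payoff (n k : nat) (c : R -> R) (p q : 'I_n -> R) (i : 'I_n) : R :=
  expected_PT k p q i - c (p i).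

Definition upd (n : nat) (f : 'I_n -> R) (i : 'I_n) (a : R) : 'I_n -> R :=
  fun j => if j == i then a else f j.

Definition admissible (a b : R) : Prop := 0 <= a < 1 /\ 0 <= b <= 1.

Definition equilibrium (n k : nat) (c : R -> R) (p q : 'I_n -> R) : Prop :=
  (forall i, admissible (p i) (q i)) /\
  forall i (a b : R), admissible a b ->
    payoff k c (upd p i a) (upd q i b) i <= payoff k c p q i.

Definition sym_invest_eq (n k : nat) (c : R -> R) (ps qs : R) : Prop :=
  equilibrium k c (fun _ : 'I_n => ps) (fun _ : 'I_n => qs) /\ 0 < ps.

Definition iota_rate (a b : R) : R := a * b.

Definition cost_ok (c : R -> R) : Prop :=
  c 0 = 0 /\ (forall x, 0 <= x < 1 -> 0 <= c x) /\
  (forall x y, 0 <= x -> x < y -> y < 1 -> c x < c y) /\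
  (forall x y t, 0 <= x < 1 -> 0 <= y < 1 -> 0 <= t <= 1 ->
     c (t * x + (1 - t) * y) <= t * c x + (1 - t) * c y) /\
  (exists c' : R -> R,
     (forall x, 0 < x < 1 -> derivable_pt_lim c x (c' x)) /\
     limit1_in (fun h => (c h - c 0) / h) (fun h => 0 < h < 1) (c' 0) 0 /\
     (forall x, 0 <= x < 1 -> limit1_in c' (fun y => 0 <= y < 1) (c' x) x)) /\
  (forall M, exists eps, 0 < eps /\ forall x, 1 - eps < x < 1 -> M < c x).

(* With delta = 0, fix a firm playing (a, b) against rivals playing (p, q). A k-set t of ideas
   containing the firm is one of its private technologies iff t is discovered, the firm learns
   directly from its k - 1 partners in t, no partner learns from all other members of t and no
   outsider learns from all of t. All these events are independent, so the payoff is
   C(n-1, k-1) a p^(k-1) G(b) - c(a) with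
   G(b) = (bq)^(k-1) (1 - bq q^(2(k-2)))^(k-1) (1 - bq q^(2(k-1)))^(n-k).
   In a symmetric investment equilibrium q is an interior maximiser of G, and G'(q) = 0 is a
   polynomial equation in r = q^2 which forces r -> 0 and then n r^k -> k - 1.
   Conversely, for large n that equation has a small root r; for q = sqrt r the derivative of G
   changes sign only at q, so q maximises G, and p is taken to be an interior maximiser of
   C(n-1, k-1) G(q) p^k / k - c(p); convexity of c makes every deviation unprofitable. *)

From Stdlib Require Import Reals Lra Lia.
From Coquelicot Require Import Coquelicot.
From HB Require Import structures.
From mathcomp Require Import all_boot zify.

Set Implicit Arguments.
Unset Strict Implicit.
Unset Printing Implicit Defensive.

Local Open Scope R_scope.

Lemma Rmult_left_zero : left_zero R0 Rmult. Proof. by move=> x; rewrite Rmult_0_l. Qed.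
Lemma Rmult_right_zero : right_zero R0 Rmult. Proof. by move=> x; rewrite Rmult_0_r. Qed.
HB.instance Definition _ := Monoid.isMulLaw.Build R R0 Rmult Rmult_left_zero Rmult_right_zero.
Lemma Rmult_plus_left_distr : left_distributive Rmult Rplus.
Proof. by move=> x y z; rewrite Rmult_plus_distr_r. Qed.
Lemma Rmult_plus_right_distr : right_distributive Rmult Rplus.
Proof. by move=> x y z; rewrite Rmult_plus_distr_l. Qed.
HB.instance Definition _ :=
  Monoid.isAddLaw.Build R Rmult Rplus Rmult_plus_left_distr Rmult_plus_right_distr.

Definition indR (b : bool) : R := if b then 1 else 0.

Lemma indR_andb a b : indR (a && b) = indR a * indR b.
Proof. by case: a; case: b; rewrite /indR /=; ring. Qed.

Lemma INR_sumn (I : finType) (P : pred I) (F : I -> nat) :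
  INR (\sum_(i | P i) F i)%N = \big[Rplus/R0]_(i | P i) INR (F i).
Proof. exact: (big_morph INR plus_INR). Qed.

Lemma INR_card_set (T : finType) (A : {set T}) :
  INR #|A| = \big[Rplus/R0]_(t : T) indR (t \in A).
Proof.
rewrite -sum1_card big_mkcond INR_sumn; apply: eq_bigr => t _.
by rewrite /indR; case: (t \in A).
Qed.

Lemma prodR_const (I : finType) (P : pred I) (x : R) :
  \big[Rmult/R1]_(i | P i) x = x ^ #|P|.
Proof. by rewrite big_const; elim: #|P| => //= m ->. Qed.

Lemma prodR_const_in (I : finType) (A : {set I}) (f : I -> R) x :
  {in A, forall m, f m = x} -> \big[Rmult/R1]_(m in A) f m = x ^ #|A|.
Proof. by move=> fA; rewrite (eq_bigr (fun _ => x)) ?prodR_const // => m /fA. Qed.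

Lemma prodR_D1 (I : finType) (A : {set I}) (f : I -> R) a : a \in A ->
  \big[Rmult/R1]_(m in A) f m = f a * \big[Rmult/R1]_(m in A :\ a) f m.
Proof.
by move=> aA; rewrite (bigD1 a) //=; congr Rmult; apply: eq_bigl => m; rewrite !inE andbC.
Qed.

Lemma indR_forall (I : finType) (P : pred I) :
  indR [forall x, P x] = \big[Rmult/R1]_x indR (P x).
Proof.
case: (boolP [forall x, P x]) => [/forallP PT | /forallPn [x /negbTE Px]].
  by rewrite big1 // => x _; rewrite PT.
by rewrite (bigD1 x) //= Px /indR Rmult_0_l.
Qed.

Lemma sum_ffun_bool (I : finType) (F : I -> bool -> R) :
  \big[Rplus/R0]_(g : {ffun I -> bool}) \big[Rmult/R1]_m F m (g m) =
  \big[Rmult/R1]_m (F m true + F m false).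
Proof.
rewrite -(bigA_distr_bigA F); apply: eq_bigr => m _.
rewrite (bigD1 true) // (bigD1 false) // big_pred0 /= ?Rplus_0_r //; by case.
Qed.

Lemma sumR_pair (T1 T2 : finType) (F : T1 * T2 -> R) :
  \big[Rplus/R0]_(w : T1 * T2) F w = \big[Rplus/R0]_x \big[Rplus/R0]_y F (x, y).
Proof. by rewrite pair_bigA; apply: eq_bigr => -[]. Qed.

Lemma sumR_mul_sep (T1 T2 : finType) (c : R) (f : T1 -> R) (g : T2 -> R) :
  \big[Rplus/R0]_x \big[Rplus/R0]_y (c * (f x * g y)) =
  c * (\big[Rplus/R0]_x f x * \big[Rplus/R0]_y g y).
Proof.
rewrite big_distrl big_distrr /=; apply: eq_bigr => x _.
by rewrite big_distrr big_distrr /=; apply: eq_bigr => y _.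
Qed.

Lemma bern_mass a : bern a true + bern a false = 1.
Proof. rewrite /=; ring. Qed.

Lemma sum_ffun_bool_all (I : finType) (F : I -> bool -> R) (A : {set I}) :
  (forall m, F m true + F m false = 1) ->
  \big[Rplus/R0]_(g : {ffun I -> bool})
     (\big[Rmult/R1]_m F m (g m) * indR [forall m, (m \in A) ==> g m])
  = \big[Rmult/R1]_(m in A) F m true.
Proof.
move=> F1; rewrite (eq_bigr (fun g : {ffun I -> bool} =>
    \big[Rmult/R1]_m (F m (g m) * indR ((m \in A) ==> g m)))); last first.
  by move=> g _; rewrite (indR_forall (fun m => (m \in A) ==> g m)) big_split.
rewrite (sum_ffun_bool (fun m b => F m b * indR ((m \in A) ==> b))) [RHS]big_mkcond.
apply: eq_bigr => m _.
case: (m \in A); rewrite /indR /= !Rmult_1_r ?Rmult_0_r ?Rplus_0_r //; exact: F1.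
Qed.

Lemma card_sets_with (n k : nat) (i : 'I_n) : (0 < k)%N ->
  #|[set t : {set 'I_n} | (#|t| == k) && (i \in t)]| = 'C(n.-1, k.-1).
Proof.
move=> k_gt0.
have i_notin (A : {set 'I_n}) : A \subset [set~ i] -> i \notin A.
  by move=> Ai; apply/negP => /(subsetP Ai); rewrite !inE eqxx.
have -> : [set t : {set 'I_n} | (#|t| == k) && (i \in t)] =
   (fun A => i |: A) @: [set A : {set 'I_n} | A \subset [set~ i] & #|A| == k.-1].
  apply/setP => t; rewrite inE; apply/idP/imsetP => [/andP [/eqP tk it] | [A]].
    exists (t :\ i); last by rewrite setD1K.
    rewrite inE; apply/andP; split; first by apply/subsetP => m; rewrite !inE => /andP [].
    by move: (cardsD1 i t); rewrite it tk add1n => ->.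
  rewrite inE => /andP [Ai /eqP Ak] ->.
  by rewrite cardsU1 i_notin // Ak setU11 andbT add1n prednK.
rewrite card_in_imset => [|A B]; first by rewrite cards_draws cardsC1 card_ord.
rewrite !inE => /andP [/i_notin iA _] /andP [/i_notin iB _] AB.
by rewrite -(setU1K iA) -(setU1K iB) AB.
Qed.

Lemma n_leq_bin n j : (0 < j)%N -> (j < n)%N -> (n <= 'C(n, j))%N.
Proof.
elim: n j => [|n IH] [|j] // _ jn.
case: (ltnP j.+1 n) => [jn' | nj]; last by rewrite (_ : j.+1 = n) ?binSn //; lia.
rewrite binS -add1n addnC; apply: leq_add; first exact: IH.
by rewrite bin_gt0 ltnW.
Qed.

(** * Probability that a technology is private *)

Section Outcomes.
Variable n : nat.
Notation I := 'I_n.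

Definition link_weight (q : I -> R) (e : I * I) (b : bool) : R :=
  if e.1 == e.2 then bern 0 b else bern (q e.1 * q e.2) b.

Lemma link_weight_mass q e : link_weight q e true + link_weight q e false = 1.
Proof. by rewrite /link_weight; case: ifP => _; apply: bern_mass. Qed.

Definition learns_all (L : {ffun I * I -> bool}) (j : I) (t : {set I}) : bool :=
  [forall m, (m \in t :\ j) ==> L (j, m)].

Lemma knows_learns_all (w : outcome n) j (t : {set I}) :
  t \subset discovered w -> knows w j t = learns_all w.2 j t.
Proof.
move=> /subsetP td; apply/subsetP/forallP => [tj m | tj m mt].
  apply/implyP => /setD1P [mj mt]; move: (tj m mt).
  by rewrite !inE (negbTE mj) => /andP [].
rewrite !inE; case: eqP => //= /eqP mj.
move: (tj m); rewrite !inE mj mt /= => ->; rewrite andbT.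
by move: (td m mt); rewrite inE => ->.
Qed.

Lemma in_PT k (w : outcome n) i (t : {set I}) :
  (t \in PT k w i) = [&& #|t| == k, i \in t, t \subset discovered w,
                        learns_all w.2 i t &
                        [forall j, (j != i) ==> ~~ learns_all w.2 j t]].
Proof.
rewrite /PT inE /technology.
case: (boolP (t \subset discovered w)) => td; last by rewrite andbF /= !andbF.
rewrite andbT knows_learns_all //; do 3!congr andb.
by apply: eq_forallb => j; rewrite knows_learns_all.
Qed.

Lemma links_from_all (q : I -> R) j (A : {set I}) : j \notin A ->
  \big[Rplus/R0]_(g : {ffun I -> bool})
     (\big[Rmult/R1]_m link_weight q (j, m) (g m) * indR [forall m, (m \in A) ==> g m])
  = \big[Rmult/R1]_(m in A) (q j * q m).
Proof.
move=> jA; rewrite (sum_ffun_bool_all (F := fun m => link_weight q (j, m))) => [|m]; last first.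
  exact: link_weight_mass.
apply: eq_bigr => m mA; rewrite /link_weight /=.
by case: eqP => [jm | //]; move: jA; rewrite jm mA.
Qed.

Lemma links_mass (q : I -> R) j :
  \big[Rplus/R0]_(g : {ffun I -> bool}) \big[Rmult/R1]_m link_weight q (j, m) (g m) = 1.
Proof.
rewrite (sum_ffun_bool (fun m => link_weight q (j, m))).
by rewrite big1 // => m _; apply: link_weight_mass.
Qed.

Lemma links_not_from_all (q : I -> R) j (A : {set I}) : j \notin A ->
  \big[Rplus/R0]_(g : {ffun I -> bool})
     (\big[Rmult/R1]_m link_weight q (j, m) (g m) * (1 - indR [forall m, (m \in A) ==> g m]))
  = 1 - \big[Rmult/R1]_(m in A) (q j * q m).
Proof.
have splitD x y : x * (1 - y) = x + -1 * (x * y) by ring.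
have joinD x : 1 + -1 * x = 1 - x by ring.
move=> jA; rewrite (eq_bigr _ (fun g _ => splitD _ _)).
by rewrite big_split /= -big_distrr /= links_mass links_from_all // joinD.
Qed.

End Outcomes.

Section Technologies.
Variable n : nat.
Notation I := 'I_n.

Lemma discovery_mass (p : I -> R) (t : {set I}) :
  \big[Rplus/R0]_(d : {ffun I -> bool})
     (\big[Rmult/R1]_m bern (p m) (d m) * indR [forall m, (m \in t) ==> d m])
  = \big[Rmult/R1]_(m in t) p m.
Proof. by rewrite (sum_ffun_bool_all (F := fun m => bern (p m))) // => m; apply: bern_mass. Qed.

Definition uncurry_links (G : {ffun I -> {ffun I -> bool}}) : {ffun I * I -> bool} :=
  [ffun e => G e.1 e.2].

Lemma uncurry_links_bij : bijective uncurry_links.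
Proof.
exists (fun L : {ffun I * I -> bool} => [ffun j => [ffun m => L (j, m)]]).
  by move=> G; apply/ffunP => j; apply/ffunP => m; rewrite !ffunE.
by move=> L; apply/ffunP => [[j m]]; rewrite !ffunE.
Qed.

Lemma private_learning_mass (q : I -> R) (i : I) (t : {set I}) :
  \big[Rplus/R0]_(L : {ffun I * I -> bool})
     (\big[Rmult/R1]_e link_weight q e (L e) *
      indR (learns_all L i t && [forall j, (j != i) ==> ~~ learns_all L j t]))
  = \big[Rmult/R1]_(m in t :\ i) (q i * q m) *
    \big[Rmult/R1]_(j | j != i) (1 - \big[Rmult/R1]_(m in t :\ j) (q j * q m)).
Proof.
rewrite (reindex uncurry_links); last exact/onW_bij/uncurry_links_bij.
(* Curried, the event factorises over the rows [G j]: row [i] must contain all of [t :\ i],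
   every other row [j] must miss some member of [t :\ j]. *)
pose X (G : {ffun I -> {ffun I -> bool}}) j := [forall m, (m \in t :\ j) ==> G j m].
pose f j b := if j == i then indR b else 1 - indR b.
have row_factor G : \big[Rmult/R1]_e link_weight q e (uncurry_links G e) *
    indR (learns_all (uncurry_links G) i t &&
          [forall j, (j != i) ==> ~~ learns_all (uncurry_links G) j t])
  = \big[Rmult/R1]_j (\big[Rmult/R1]_m link_weight q (j, m) (G j m) * f j (X G j)).
  have XG j : learns_all (uncurry_links G) j t = X G j.
    by apply: eq_forallb => m; rewrite ffunE.
  rewrite big_split /= pair_bigA; congr Rmult.
    by apply: eq_bigr => -[j m] _; rewrite ffunE.
  rewrite (bigD1 i) //= {1}/f eqxx XG.
  rewrite (@eq_forallb _ _ (fun j => (j != i) ==> ~~ X G j)) => [|j]; last by rewrite XG.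
  case: (X G i) => /=; last by rewrite /indR !Rmult_0_l.
  rewrite (indR_forall (fun j => (j != i) ==> ~~ X G j)) (bigD1 i) //= eqxx /indR !Rmult_1_l.
  apply: eq_bigr => j ji; rewrite /f (negbTE ji) /indR.
  by case: (X G j) => /=; ring.
rewrite (eq_bigr _ (fun G _ => row_factor G)).
rewrite -(bigA_distr_bigA (fun j (g : {ffun I -> bool}) =>
  \big[Rmult/R1]_m link_weight q (j, m) (g m) * f j [forall m, (m \in t :\ j) ==> g m])).
rewrite (bigD1 i) //=; congr Rmult.
  by rewrite /f eqxx links_from_all // !inE eqxx.
by apply: eq_bigr => j ji; rewrite /f (negbTE ji) links_not_from_all // !inE eqxx.
Qed.

Definition private_prob (p q : I -> R) (i : I) (t : {set I}) : R :=
  \big[Rmult/R1]_(m in t) p m *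
  (\big[Rmult/R1]_(m in t :\ i) (q i * q m) *
   \big[Rmult/R1]_(j | j != i) (1 - \big[Rmult/R1]_(m in t :\ j) (q j * q m))).

Lemma subset_discoveredE (w : outcome n) (t : {set I}) :
  (t \subset discovered w) = [forall m, (m \in t) ==> w.1 m].
Proof.
apply/subsetP/forallP => [td m | tw m mt]; first by apply/implyP => /td; rewrite inE.
by rewrite inE; apply: (implyP (tw m)).
Qed.

Lemma outcome_prob_PT k (p q : I -> R) i (t : {set I}) d (L : {ffun I * I -> bool}) :
  outcome_prob p q (d, L) * indR (t \in PT k (d, L) i) =
  indR ((#|t| == k) && (i \in t)) *
  ((\big[Rmult/R1]_m bern (p m) (d m) * indR [forall m, (m \in t) ==> d m]) *
   (\big[Rmult/R1]_e link_weight q e (L e) *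
    indR (learns_all L i t && [forall j, (j != i) ==> ~~ learns_all L j t]))).
Proof.
have reorder a b x y z : (a * b) * (x * y * z) = x * ((a * y) * (b * z)) by ring.
rewrite in_PT subset_discoveredE /outcome_prob -reorder -!indR_andb.
congr (_ * _ * indR _).
by case: (#|t| == k); case: (i \in t); case: [forall m, _].
Qed.

Lemma expected_PT_sum k (p q : I -> R) (i : I) :
  expected_PT k p q i =
  \big[Rplus/R0]_(t : {set I}) (indR ((#|t| == k) && (i \in t)) * private_prob p q i t).
Proof.
rewrite /expected_PT (eq_bigr (fun w : outcome n => \big[Rplus/R0]_(t : {set I})
    (outcome_prob p q w * indR (t \in PT k w i)))); last first.
  by move=> w _; rewrite INR_card_set big_distrr.
rewrite exchange_big /=; apply: eq_bigr => t _.
rewrite sumR_pair (eq_bigr _ (fun d _ => eq_bigr _ (fun L _ => outcome_prob_PT k p q i t d L))).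
by rewrite sumR_mul_sep discovery_mass private_learning_mass.
Qed.

End Technologies.

(* Technologies have [k = K.+2] members and there are [n = K.+2 + M.+1] firms, so a member of a
   technology has [K.+1] partners and [M.+1] outsiders. [private_share K M q b] is the probability
   that a firm with interaction rate [b], facing rivals with rate [q], learns directly from all its
   partners while no partner and no outsider learns directly from all other members. *)
Definition tech_share (K M : nat) (al be x : R) : R :=
  x ^ K.+1 * (1 - al * x) ^ K.+1 * (1 - be * x) ^ M.+1.

Definition private_share (K M : nat) (q b : R) : R :=
  tech_share K M ((q * q) ^ K) ((q * q) ^ K.+1) (b * q).

Section SymmetricRivals.
Variables K M : nat.
Local Notation n := (K.+2 + M.+1)%N.
Variables (p q : 'I_n -> R) (i : 'I_n) (ps qs : R).
Hypotheses (p_rivals : forall j, j != i -> p j = ps) (q_rivals : forall j, j != i -> q j = qs).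

Lemma private_prob_sym (t : {set 'I_n}) : #|t| = K.+2 -> i \in t ->
  private_prob p q i t = p i * ps ^ K.+1 * private_share K M qs (q i).
Proof.
move=> tk it.
have ti : #|t :\ i| = K.+1 by move: (cardsD1 i t); rewrite it tk add1n => -[] <-.
have q_in : {in t :\ i, forall m, q i * q m = q i * qs}.
  by move=> m; rewrite !inE => /andP [mi _]; rewrite (q_rivals mi).
rewrite /private_prob (prodR_D1 _ it) (prodR_const_in (x := ps)) => [|m]; last first.
  by rewrite !inE => /andP [mi _]; apply: p_rivals.
rewrite (prodR_const_in q_in) ti.
set F := fun j => 1 - \big[Rmult/R1]_(m in t :\ j) (q j * q m).
have -> : \big[Rmult/R1]_(j | j != i) F j =
   \big[Rmult/R1]_(j in t :\ i) F j * \big[Rmult/R1]_(j in ~: t) F j.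
  rewrite (bigID (mem t)) /=; congr Rmult; apply: eq_bigl => j; rewrite !inE //.
  by case: (boolP (j \in t)) => jt; rewrite ?andbF ?andbT //; apply: contraNneq jt => ->.
have partner (j : 'I_n) : j \in t :\ i -> F j = 1 - (qs * q i) * (qs * qs) ^ K.
  rewrite !inE => /andP [ji jt].
  have itj : i \in t :\ j by rewrite !inE eq_sym ji.
  have tji : #|t :\ j :\ i| = K.
    by move: (cardsD1 j t) (cardsD1 i (t :\ j)); rewrite jt itj tk !add1n => -[] <- -[] <-.
  rewrite /F /= (prodR_D1 _ itj) (q_rivals ji) (prodR_const_in (x := qs * qs)) ?tji //.
  by move=> m; rewrite !inE => /andP [mi /andP [mj _]]; rewrite (q_rivals mi).
have outsider (j : 'I_n) : j \in ~: t -> F j = 1 - (qs * q i) * (qs * qs) ^ K.+1.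
  rewrite inE /F /= => jt.
  have -> : t :\ j = t.
    by apply/setP => m; rewrite !inE andb_idl // => mt; apply: contraNneq jt => <-.
  have ji : j != i by apply: contraNneq jt => ->.
  rewrite /F (prodR_D1 _ it) q_rivals // (prodR_const_in (x := qs * qs)) ?ti //.
  by move=> m; rewrite !inE => /andP [mi _]; rewrite (q_rivals mi).
rewrite (prodR_const_in partner) (prodR_const_in outsider) ti cardsCs setCK card_ord tk.
have swap a : 1 - qs * q i * a = 1 - a * (q i * qs) by ring.
by rewrite /private_share /tech_share addKn !swap -!Rmult_assoc.
Qed.

Lemma expected_PT_sym : expected_PT K.+2 p q i =
  INR 'C(K.+2 + M, K.+1) * (p i * ps ^ K.+1 * private_share K M qs (q i)).
Proof.
have -> : 'C(K.+2 + M, K.+1) = 'C(n.-1, K.+2.-1) by rewrite addnS.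
rewrite expected_PT_sum -(card_sets_with i) // INR_card_set big_distrl /=.
apply: eq_bigr => t _; rewrite inE /indR.
case: andP => [[/eqP tk it] | _]; last by rewrite !Rmult_0_l.
by rewrite private_prob_sym.
Qed.

End SymmetricRivals.

Lemma pow_bound01 x m : 0 <= x <= 1 -> 0 <= x ^ m <= 1.
Proof. by move=> x01; split; [apply: pow_le | rewrite -(pow1 m); apply: pow_incr]; lra. Qed.

Lemma pow_succ_le_self x m : 0 <= x <= 1 -> x ^ m.+1 <= x.
Proof. by move=> x01; have := pow_bound01 m x01; rewrite /=; nra. Qed.

Lemma exp_le_pow_one_minus x n : 0 <= x < 1 -> exp (- (INR n * (x / (1 - x)))) <= (1 - x) ^ n.
Proof.
move=> x01; set y := x / (1 - x).
have y0 : 0 <= y by apply: Rdiv_le_0_compat; lra.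
have step : exp (- y) <= 1 - x.
  have -> : 1 - x = / (1 + y) by rewrite /y; field; lra.
  by rewrite exp_Ropp; apply: Rinv_le_contravar; [lra | apply: exp_ineq1_le].
elim: n => [|n IH]; first by rewrite /= Rmult_0_l Ropp_0 exp_0; lra.
rewrite S_INR Rmult_plus_distr_r Rmult_1_l Ropp_plus_distr exp_plus /= Rmult_comm.
by apply: Rmult_le_compat => //; apply: Rlt_le; apply: exp_pos.
Qed.

Lemma derive_interior_max f x l a b : a < x < b -> derivable_pt_lim f x l ->
  (forall y, a < y < b -> f y <= f x) -> l = 0.
Proof.
move=> [ax xb] df fmax.
have dfx : derivable_pt f x by exists l.
rewrite -(derive_pt_eq_0 _ _ _ dfx df).
by apply: (deriv_maximum f a b x) => // y ay yb; apply: fmax.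
Qed.

Lemma exists_derive0_of_peak f f' a b z : a < z < b ->
  (forall y, a <= y <= b -> derivable_pt_lim f y (f' y)) -> f a < f z -> f b < f z ->
  exists p, a < p < b /\ f' p = 0.
Proof.
move=> zab df fa fb.
have cont y : a <= y <= b -> continuity_pt f y.
  by move=> yab; apply: derivable_continuous_pt; exists (f' y); apply: df.
have [p [p_max p_ab]] := continuity_ab_maj f a b ltac:(lra) cont.
have fzp := p_max z ltac:(lra).
have p_int : a < p < b.
  split; apply/Rnot_le_lt => p_out.
    have pa : p = a by lra.
    by move: fzp; rewrite pa; lra.
  have pb : p = b by lra.
  by move: fzp; rewrite pb; lra.
exists p; split => //.
by apply: (derive_interior_max p_int (df p ltac:(lra))) => y y_ab; apply: p_max; lra.
Qed.

Lemma poly_derive L m x : derivable_pt_lim (fun p => L * p ^ m.+1 / INR m.+1) x (L * x ^ m).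
Proof.
apply/is_derive_Reals; auto_derive => //.
change (match m with 0%N => 1 | _.+1 => INR m + 1 end) with (INR m.+1).
by field; apply: not_0_INR.
Qed.

Lemma Rpower_continuity_pt y x : 0 < x -> continuity_pt (fun z => Rpower z y) x.
Proof.
move=> x0; apply: derivable_continuous_pt.
by exists (y * Rpower x (y - 1)); apply: derivable_pt_lim_power.
Qed.

Lemma is_lim_seq_pow0 (r : nat -> R) m : is_lim_seq r 0 -> is_lim_seq (fun n => r n ^ m.+1) 0.
Proof.
move=> r0; have := is_lim_seq_continuous (fun y => y ^ m.+1) _ _
  (derivable_continuous_pt _ _ (derivable_pt_pow m.+1 0)) r0.
by rewrite pow_i //; lia.
Qed.

Lemma is_lim_seq_0_of_pow_bound (r : nat -> R) m C N0 :
  (forall n, (N0 <= n)%N -> 0 <= r n /\ INR (n - N0) * r n ^ m <= C) -> is_lim_seq r 0.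
Proof.
move=> bound; apply/is_lim_seq_Reals => eps eps0.
set e := Rmin eps 1.
have e0 : 0 < e by apply: Rmin_pos; lra.
have [e_eps e1] : e <= eps /\ e <= 1 by split; [apply: Rmin_l | apply: Rmin_r].
have em0 : 0 < e ^ m by apply: pow_lt.
have [n1 n1_big] := INR_archimed _ C em0.
exists (N0 + n1)%N => n n_big; have [rn0 rn_bound] := bound n ltac:(lia).
rewrite /R_dist Rminus_0_r Rabs_pos_eq //; apply: (Rlt_le_trans _ e) => //.
case: (Rlt_or_le (r n) e) => // e_rn; exfalso.
have : INR n1 * e ^ m <= INR (n - N0) * r n ^ m.
  apply: Rmult_le_compat; try apply: pos_INR; try lra.
    by apply: le_INR; lia.
  by apply: pow_incr; lra.
lra.
Qed.

(** * The private share and its first-order condition *)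

Definition share_slope (K M : nat) (al be x : R) : R :=
  INR K.+1 * (1 - be * x) * (1 - 2 * al * x) - INR M.+1 * (be * x) * (1 - al * x).

Definition dtech_share (K M : nat) (al be x : R) : R :=
  x ^ K * (1 - al * x) ^ K * (1 - be * x) ^ M * share_slope K M al be x.

Lemma tech_share_derive K M al be x :
  derivable_pt_lim (tech_share K M al be) x (dtech_share K M al be x).
Proof.
apply/is_derive_Reals; rewrite /tech_share /dtech_share /share_slope.
auto_derive => //.
change (match K with 0%N => 1 | _.+1 => INR K + 1 end) with (INR K.+1).
change (match M with 0%N => 1 | _.+1 => INR M + 1 end) with (INR M.+1).
rewrite /Rminus; ring.
Qed.

Lemma private_share_derive K M q b : derivable_pt_lim (private_share K M q) b
  (dtech_share K M ((q * q) ^ K) ((q * q) ^ K.+1) (b * q) * q).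
Proof.
have scale := @derivable_pt_lim_scal_right id b 1 q (derivable_pt_lim_id b).
have := derivable_pt_lim_comp _ _ _ _ _ scale (tech_share_derive K M _ _ (b * q)).
by rewrite Rmult_1_l; apply.
Qed.

(* [foc K M (q * q) = 0] is the first-order condition of [private_share K M q] at [b = q]. *)
Definition foc (K M : nat) (r : R) : R :=
  INR K.+1 * (1 - r ^ K.+2) * (1 - 2 * r ^ K.+1) - INR M.+1 * r ^ K.+2 * (1 - r ^ K.+1).

Lemma share_slope_diag K M r : share_slope K M (r ^ K) (r ^ K.+1) r = foc K M r.
Proof. rewrite /share_slope /foc /=; ring. Qed.

Lemma foc_of_share_max K M q : 0 < q < 1 ->
  (forall b, 0 <= b <= 1 -> private_share K M q b <= private_share K M q q) ->
  foc K M (q * q) = 0.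
Proof.
move=> q01 qmax.
have deriv0 : dtech_share K M ((q * q) ^ K) ((q * q) ^ K.+1) (q * q) * q = 0.
  apply: (derive_interior_max (a := 0) (b := 1) q01 (private_share_derive K M q q)).
  by move=> y y01; apply: qmax; lra.
move: deriv0; rewrite /dtech_share -share_slope_diag; set r := q * q => deriv0.
have r01 : 0 < r < 1 by rewrite /r; nra.
have rK := pow_bound01 K (conj (Rlt_le _ _ r01.1) (Rlt_le _ _ r01.2)).
have rK1 := pow_bound01 K.+1 (conj (Rlt_le _ _ r01.1) (Rlt_le _ _ r01.2)).
have pos : 0 < r ^ K * (1 - r ^ K * r) ^ K * (1 - r ^ K.+1 * r) ^ M * q.
  by repeat apply: Rmult_lt_0_compat; try apply: pow_lt; nra.
have : r ^ K * (1 - r ^ K * r) ^ K * (1 - r ^ K.+1 * r) ^ M * q *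
  share_slope K M (r ^ K) (r ^ K.+1) r = 0 by rewrite -deriv0; ring.
by case/Rmult_integral => //; lra.
Qed.

Lemma share_slope_antitone K M al be x y : 0 <= al <= 1 -> 0 <= be <= 1 ->
  0 <= x <= y -> y <= 1/4 -> share_slope K M al be y <= share_slope K M al be x.
Proof.
move=> al01 be01 xy y_small.
have K0 := pos_INR K.+1; have M0 := pos_INR M.+1.
have partners : (1 - be * y) * (1 - 2 * al * y) <= (1 - be * x) * (1 - 2 * al * x).
  by apply: Rmult_le_compat; nra.
have outsiders : be * x * (1 - al * x) <= be * y * (1 - al * y).
  have : 0 <= be * ((y - x) * (1 - al * (x + y))).
    by apply: Rmult_le_pos; [lra | apply: Rmult_le_pos; nra].
  have : be * y * (1 - al * y) - be * x * (1 - al * x) = be * ((y - x) * (1 - al * (x + y))).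
    by ring.
  lra.
rewrite /share_slope -!Rmult_assoc.
have := Rmult_le_compat_l _ _ _ K0 partners; have := Rmult_le_compat_l _ _ _ M0 outsiders.
rewrite !Rmult_assoc; lra.
Qed.

Lemma private_share_derive_sign K M q c : 0 < q <= 1/4 -> foc K M (q * q) = 0 ->
  0 <= c <= 1 ->
  let d := dtech_share K M ((q * q) ^ K) ((q * q) ^ K.+1) (c * q) * q in
  (c <= q -> 0 <= d) /\ (q <= c -> d <= 0).
Proof.
move=> q_small foc0 c01 /=; set r := q * q.
have r_small : 0 < r <= q / 4 by rewrite /r; nra.
have r01 : 0 <= r <= 1 by lra.
have al01 := pow_bound01 K r01; have be01 := pow_bound01 K.+1 r01.
have x_small : 0 <= c * q <= q by nra.
have pref : 0 <= (c * q) ^ K * (1 - r ^ K * (c * q)) ^ K * (1 - r ^ K.+1 * (c * q)) ^ M * q.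
  by repeat apply: Rmult_le_pos; try apply: pow_le; nra.
have slope0 : share_slope K M (r ^ K) (r ^ K.+1) r = 0 by rewrite share_slope_diag.
rewrite /dtech_share -!/r.
have -> : forall a s, a * s * q = (a * q) * s by move=> *; ring.
split=> cq.
  apply: Rmult_le_pos => //; rewrite -slope0.
  by apply: share_slope_antitone => //; rewrite /r; nra.
apply: Rmult_le_0_l => //; rewrite -slope0.
by apply: share_slope_antitone => //; rewrite /r; nra.
Qed.

Lemma private_share_max K M q : 0 < q <= 1/4 -> foc K M (q * q) = 0 ->
  forall b, 0 <= b <= 1 -> private_share K M q b <= private_share K M q q.
Proof.
move=> q_small foc0 b b01.
case: (Rtotal_order b q) => [bq | [-> | qb]]; [| lra |].
  have [c [mvt c_bq]] := MVT_cor2 _ _ _ _ bq (fun c _ => private_share_derive K M q c).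
  have [up _] := private_share_derive_sign q_small foc0 (c := c) ltac:(lra).
  have := up (Rlt_le _ _ (proj2 c_bq)); nra.
have [c [mvt c_qb]] := MVT_cor2 _ _ _ _ qb (fun c _ => private_share_derive K M q c).
have [_ down] := private_share_derive_sign q_small foc0 (c := c) ltac:(lra).
have := down (Rlt_le _ _ (proj1 c_qb)); nra.
Qed.

Lemma private_share00 K M : private_share K M 0 0 = 0.
Proof. by rewrite /private_share /tech_share Rmult_0_l pow_i //; [ring | lia]. Qed.

Lemma private_share11 K M : private_share K M 1 1 = 0.
Proof.
rewrite /private_share /tech_share !Rmult_1_l !pow1 !Rmult_1_l Rminus_eq_0.
by rewrite pow_i; [ring | lia].
Qed.

(** * Roots of the first-order condition *)

Lemma foc_root_upper K M r : 0 < r < 1 -> foc K M r = 0 ->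
  INR M.+1 * r ^ K.+2 <= INR K.+1 * (1 - r ^ K.+2).
Proof.
move=> r01; rewrite /foc => foc0.
have [u0 u1] := pow_lt_1_compat r K.+1 ltac:(lra) ltac:(lia).
have [v0 v1] := pow_lt_1_compat r K.+2 ltac:(lra) ltac:(lia).
have Kv : 0 <= INR K.+1 * (1 - r ^ K.+2) by have := pos_INR K.+1; nra.
apply: (Rmult_le_reg_r (1 - r ^ K.+1)); first lra.
have -> : INR M.+1 * r ^ K.+2 * (1 - r ^ K.+1) =
          INR K.+1 * (1 - r ^ K.+2) * (1 - 2 * r ^ K.+1) by lra.
by apply: Rmult_le_compat_l; lra.
Qed.

Lemma foc_root_lower K M r : 0 < r <= 1/16 -> foc K M r = 0 -> 1/2 <= INR M.+1 * r ^ K.+2.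
Proof.
move=> r_small; rewrite /foc => foc0.
have r01 : 0 <= r <= 1 by lra.
have u_small : 0 < r ^ K.+1 <= r by split; [apply: pow_lt; lra | apply: pow_succ_le_self].
have v_small : 0 < r ^ K.+2 <= r by split; [apply: pow_lt; lra | apply: pow_succ_le_self].
have K1 : 1 <= INR K.+1 by rewrite S_INR; have := pos_INR K; lra.
have M0 := pos_INR M.+1.
have : 1/2 <= INR K.+1 * (1 - r ^ K.+2) * (1 - 2 * r ^ K.+1).
  have : 1/2 <= (1 - r ^ K.+2) * (1 - 2 * r ^ K.+1) by nra.
  nra.
nra.
Qed.

(* The right-hand side tends to [K.+1] as [r] tends to [0]. *)
Lemma foc_root_scaled K M r : 0 < r < 1 -> foc K M r = 0 ->
  INR (K.+2 + M.+1) * r ^ K.+2 =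
  INR K.+1 * (1 - r ^ K.+2) * (1 - 2 * r ^ K.+1) / (1 - r ^ K.+1) + INR K.+2 * r ^ K.+2.
Proof.
move=> r01; rewrite /foc => foc0.
have [_ u1] := pow_lt_1_compat r K.+1 ltac:(lra) ltac:(lia).
rewrite plus_INR Rmult_plus_distr_r Rplus_comm.
have -> : INR K.+1 * (1 - r ^ K.+2) * (1 - 2 * r ^ K.+1) =
          INR M.+1 * r ^ K.+2 * (1 - r ^ K.+1) by lra.
by field; lra.
Qed.

Lemma foc_roots_limit K (r : nat -> R) N0 : (K.+3 <= N0)%N ->
  (forall n, (N0 <= n)%N -> 0 < r n < 1 /\ foc K (n - K.+3) (r n) = 0) ->
  Un_cv (fun n => r n * Rpower (INR n) (1 / INR K.+2))
        (Rpower (INR K.+2 - 1) (1 / INR K.+2)).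
Proof.
move=> N0_big roots.
have r0 : is_lim_seq r 0.
  apply: (is_lim_seq_0_of_pow_bound (m := K.+2) (C := INR K.+1) (N0 := N0)) => n n_big.
  have [r01 foc0] := roots n n_big.
  have rv : 0 <= r n ^ K.+2 by apply: pow_le; lra.
  have := foc_root_upper r01 foc0; have := le_INR (n - N0) (n - K.+3).+1 ltac:(lia).
  have := pos_INR K.+1; split; [lra | nra].
have u0 := is_lim_seq_pow0 K r0; have v0 := is_lim_seq_pow0 K.+1 r0.
pose W n := INR K.+1 * (1 - r n ^ K.+2) * (1 - 2 * r n ^ K.+1) / (1 - r n ^ K.+1)
            + INR K.+2 * r n ^ K.+2.
have W_lim : is_lim_seq W (INR K.+1).
  have -> : INR K.+1 = INR K.+1 * (1 - 0) * (1 - 2 * 0) / (1 - 0) + INR K.+2 * 0 by field.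
  have cst (a : R) : is_lim_seq (fun _ => a) a := is_lim_seq_const a.
  have lim_1m (u : nat -> R) (l : R) : is_lim_seq u l -> is_lim_seq (fun n => 1 - u n) (1 - l).
    exact: is_lim_seq_minus' _ _ _ _ (cst 1).
  have lim_am a (u : nat -> R) (l : R) : is_lim_seq u l -> is_lim_seq (fun n => a * u n) (a * l).
    exact: is_lim_seq_mult' _ _ _ _ (cst a).
  apply: is_lim_seq_plus'; last exact: lim_am.
  apply: is_lim_seq_div'; [ | exact: lim_1m | lra].
  apply: is_lim_seq_mult'; last exact/lim_1m/lim_am.
  exact/lim_am/lim_1m.
have k0 : 0 < INR K.+2 by apply: lt_0_INR; lia.
have -> : INR K.+2 - 1 = INR K.+1 by rewrite (S_INR K.+1); ring.
apply/is_lim_seq_Reals/(is_lim_seq_ext_loc (fun n => Rpower (W n) (1 / INR K.+2))); last first.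
  have K0 : 0 < INR K.+1 by apply: lt_0_INR; lia.
  exact: (is_lim_seq_continuous _ _ _ (Rpower_continuity_pt _ K0) W_lim).
exists N0 => n n_big; have [r01 foc0] := roots n ltac:(lia).
have Wn : W n = INR n * r n ^ K.+2.
  by rewrite /W -(foc_root_scaled r01 foc0); congr (INR _ * _); lia.
rewrite Wn -Rpower_mult_distr; [ | apply: lt_0_INR; lia | apply: pow_lt; lra].
rewrite -(Rpower_pow K.+2 (r n)); last lra.
rewrite Rpower_mult (_ : INR K.+2 * (1 / INR K.+2) = 1); last by field; lra.
by rewrite Rpower_1; [ring | lra].
Qed.

Lemma foc_continuity K M : continuity (foc K M).
Proof. rewrite /foc; reg. Qed.

Lemma foc_small_root K rho : 0 < rho <= 1/16 ->
  exists M0, forall M, (M0 <= M)%N -> exists r, 0 < r < rho /\ foc K M r = 0.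
Proof.
move=> rho_small.
have rho01 : 0 <= rho <= 1 by lra.
have u_small : 0 < rho ^ K.+1 <= rho by split; [apply: pow_lt; lra | apply: pow_succ_le_self].
have v_small : 0 < rho ^ K.+2 <= rho by split; [apply: pow_lt; lra | apply: pow_succ_le_self].
have [M0 M0_big] := INR_archimed (rho ^ K.+2 / 2) (INR K.+1) ltac:(lra).
exists M0 => M M_big.
have K0 := pos_INR K.+1.
have foc_rho : foc K M rho < 0.
  have partners : INR K.+1 * (1 - rho ^ K.+2) * (1 - 2 * rho ^ K.+1) <= INR K.+1.
    rewrite Rmult_assoc -{2}(Rmult_1_r (INR K.+1)).
    by apply: Rmult_le_compat_l => //; nra.
  have outsiders : INR M0 * (rho ^ K.+2 / 2) <= INR M.+1 * rho ^ K.+2 * (1 - rho ^ K.+1).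
    rewrite Rmult_assoc; apply: Rmult_le_compat; try lra; first exact: pos_INR.
      by apply: le_INR; lia.
    nra.
  rewrite /foc; lra.
have foc_0 : foc K M 0 = INR K.+1 by rewrite /foc !pow_i //; try lia; ring.
have K1 : 0 < INR K.+1 by apply: lt_0_INR; lia.
have [z [z_range z_root]] := IVT (fun r => - foc K M r) 0 rho
  (continuity_opp _ (foc_continuity K M)) ltac:(lra)
  ltac:(rewrite /= foc_0; lra) ltac:(rewrite /=; lra).
exists z; split; last lra.
split; apply/Rnot_le_lt => z_out.
  have z0 : z = 0 by lra.
  by move: z_root; rewrite z0 /= foc_0; lra.
have zrho : z = rho by lra.
by move: z_root; rewrite zrho /=; lra.
Qed.

Lemma private_share_lower K M r : 0 < r <= 1/16 -> foc K M r = 0 ->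
  / (2 * r) * (/ 2) ^ K.+1 * exp (- INR K.+1) <= INR M.+1 * private_share K M (sqrt r) (sqrt r).
Proof.
move=> r_small foc0.
have lower := foc_root_lower r_small foc0.
have upper := foc_root_upper (r := r) ltac:(lra) foc0.
rewrite /private_share /tech_share sqrt_sqrt; last lra.
have -> : r ^ K * r = r ^ K.+1 by rewrite /= Rmult_comm.
have -> : r ^ K.+1 * r = r ^ K.+2 by rewrite [in RHS]/= Rmult_comm.
have r01 : 0 <= r <= 1 by lra.
set u := r ^ K.+1 in lower upper *; set v := r ^ K.+2 in lower upper *.
have u_small : 0 < u <= r by split; [apply: pow_lt; lra | apply: pow_succ_le_self].
have v_small : 0 < v <= r by split; [apply: pow_lt; lra | apply: pow_succ_le_self].
have first_factor : / (2 * r) <= INR M.+1 * u.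
  apply: (Rmult_le_reg_l (2 * r)); first lra.
  by rewrite Rinv_r; [rewrite (_ : v = r * u) // in lower; nra | lra].
have second_factor : (/ 2) ^ K.+1 <= (1 - u) ^ K.+1 by apply: pow_incr; lra.
have third_factor : exp (- INR K.+1) <= (1 - v) ^ M.+1.
  apply: Rle_trans (exp_le_pow_one_minus M.+1 _); last lra.
  have : INR M.+1 * (v / (1 - v)) <= INR K.+1.
    apply: (Rmult_le_reg_r (1 - v)); first lra.
    by rewrite (_ : INR M.+1 * (v / (1 - v)) * (1 - v) = INR M.+1 * v) //; field; lra.
  case/Rle_lt_or_eq_dec => [lt | ->]; last lra.
  by apply/Rlt_le/exp_increasing; lra.
have P1 : 0 <= / (2 * r) by apply/Rlt_le/Rinv_0_lt_compat; lra.
have P2 : 0 <= (/ 2) ^ K.+1 by apply: pow_le; lra.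
have P3 := Rlt_le _ _ (exp_pos (- INR K.+1)).
have -> : INR M.+1 * (u * (1 - u) ^ K.+1 * (1 - v) ^ M.+1) =
          INR M.+1 * u * (1 - u) ^ K.+1 * (1 - v) ^ M.+1 by ring.
apply: Rmult_le_compat => //; first exact: Rmult_le_pos.
exact: Rmult_le_compat.
Qed.

Lemma exists_share_root K (L : R) : exists M0, forall M, (M0 <= M)%N ->
  exists q, 0 < q <= 1/4 /\ foc K M (q * q) = 0 /\ L < INR M.+1 * private_share K M q q.
Proof.
set C := (/ 2) ^ K.+1 * exp (- INR K.+1).
have C0 : 0 < C by apply: Rmult_lt_0_compat; [apply: pow_lt; lra | apply: exp_pos].
have L1 : 0 < Rabs L + 1 by have := Rabs_pos L; lra.
set rho := Rmin (1/16) (C / (2 * (Rabs L + 1))).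
have rho_small : 0 < rho <= 1/16.
  split; last exact: Rmin_l.
  by apply: Rmin_pos; [lra | apply: Rdiv_lt_0_compat; lra].
have rho_C : rho * (2 * (Rabs L + 1)) <= C.
  have := Rmin_r (1/16) (C / (2 * (Rabs L + 1))); rewrite -/rho => le.
  have := Rmult_le_compat_r (2 * (Rabs L + 1)) _ _ ltac:(lra) le.
  by rewrite /Rdiv Rmult_assoc Rinv_l; lra.
have [M0 roots] := foc_small_root K rho_small.
exists M0 => M M_big; have [r [r_rho foc0]] := roots M M_big.
have sr := sqrt_sqrt r ltac:(lra); have sr0 := sqrt_lt_R0 r ltac:(lra).
exists (sqrt r); split; first by split; nra.
split; first by rewrite sr.
apply: Rlt_le_trans (private_share_lower (K := K) _ foc0); last lra.
have : Rabs L + 1 <= / (2 * r) * C.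
  apply: (Rmult_le_reg_l (2 * r)); first lra.
  rewrite -Rmult_assoc Rinv_r; nra.
rewrite /C -Rmult_assoc; have := Rle_abs L; lra.
Qed.

(** * Symmetric equilibria *)

Definition deviation_payoff K M (c : R -> R) (N ps qs a b : R) : R :=
  N * (a * ps ^ K.+1 * private_share K M qs b) - c a.

Section Cost.
Variables c c' : R -> R.
Hypothesis c_deriv : forall x, 0 < x < 1 -> derivable_pt_lim c x (c' x).
Hypothesis c_nonneg : forall x, 0 <= x < 1 -> 0 <= c x.
Hypothesis c_blowup : forall M, exists eps, 0 < eps /\ forall x, 1 - eps < x < 1 -> M < c x.
Hypothesis c_convex : forall x y t, 0 <= x < 1 -> 0 <= y < 1 -> 0 <= t <= 1 ->
  c (t * x + (1 - t) * y) <= t * c x + (1 - t) * c y.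

Lemma convex_tangent_le d x a : 0 < x < 1 -> 0 <= a < 1 ->
  derivable_pt_lim c x d -> c x + d * (a - x) <= c a.
Proof.
move=> x01 a01 dc; apply/Rnot_lt_le => gap.
set g := c x + d * (a - x) - c a.
have g0 : 0 < g by rewrite /g; lra.
have ax : a - x <> 0.
  by move=> /Rminus_diag_uniq ax; move: g0; rewrite /g ax Rminus_eq_0 Rmult_0_r; lra.
set D := Rabs (a - x).
have D0 : 0 < D by apply: Rabs_pos_lt.
have [delta close] := dc (g / (2 * D)) ltac:(apply: Rdiv_lt_0_compat; lra).
have delta0 := cond_pos delta.
set t := Rmin (1/2) (delta / (2 * D)).
have t0 : 0 < t by apply: Rmin_pos; [lra | apply: Rdiv_lt_0_compat; lra].
have [t_half t_delta] : t <= 1/2 /\ t <= delta / (2 * D) by split; [apply: Rmin_l | apply: Rmin_r].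
set h := t * (a - x).
have h0 : h <> 0 by apply: Rmult_integral_contrapositive; split; lra.
have h_delta : Rabs h < delta.
  rewrite /h Rabs_mult (Rabs_pos_eq t) -/D; last lra.
  have := Rmult_le_compat_r D _ _ (Rlt_le _ _ D0) t_delta.
  have -> : delta / (2 * D) * D = delta / 2 by field; lra.
  lra.
have := close h h0 h_delta; set Q := (c (x + h) - c x) / h => Q_close.
have chord : Q * (a - x) <= c a - c x.
  have : c (x + h) <= t * c a + (1 - t) * c x.
    have -> : x + h = t * a + (1 - t) * x by rewrite /h; ring.
    by apply: c_convex; lra.
  have -> : c (x + h) = c x + Q * h by rewrite /Q; field.
  rewrite /h => le; apply: (Rmult_le_reg_l t) => //; lra.
have : (d - Q) * (a - x) <= g / 2.
  apply: Rle_trans (Rle_abs _) _.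
  rewrite Rabs_mult -/D Rabs_minus_sym.
  have := Rmult_le_compat_r D _ _ (Rlt_le _ _ D0) (Rlt_le _ _ Q_close).
  have -> : g / (2 * D) * D = g / 2 by field; lra.
  done.
rewrite /g in g0 *; lra.
Qed.

Lemma exists_cost_foc K L : 0 < L -> c (1/2) < L * (1/2) ^ K.+2 / INR K.+2 ->
  exists p, 0 < p < 1 /\ c' p = L * p ^ K.+1.
Proof.
move=> L0 half_profit.
set k := INR K.+2 in half_profit *; have k0 : 0 < k by apply: lt_0_INR; lia.
set Psi := fun p => L * p ^ K.+2 / k - c p.
have Psi_half : 0 < Psi (1/2) by rewrite /Psi; lra.
have gain_le x : 0 <= x <= 1 -> L * x ^ K.+2 / k <= L * x / k.
  move=> x01; apply: Rmult_le_compat_r; first exact/Rlt_le/Rinv_0_lt_compat.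
  by apply: Rmult_le_compat_l; [lra | apply: pow_succ_le_self].
set delta := Rmin (1/4) (Psi (1/2) * k / (2 * L)).
have delta0 : 0 < delta.
  by apply: Rmin_pos; [lra | apply: Rdiv_lt_0_compat; [apply: Rmult_lt_0_compat |]; lra].
have [delta_small delta_Psi] : delta <= 1/4 /\ delta <= Psi (1/2) * k / (2 * L).
  by split; [apply: Rmin_l | apply: Rmin_r].
have Psi_delta : Psi delta < Psi (1/2).
  have := gain_le delta ltac:(lra); have := @c_nonneg delta ltac:(lra).
  have : L * delta / k <= Psi (1/2) / 2.
    have -> : Psi (1/2) / 2 = L * (Psi (1/2) * k / (2 * L)) / k by field; lra.
    apply: Rmult_le_compat_r; first exact/Rlt_le/Rinv_0_lt_compat.
    by apply: Rmult_le_compat_l; lra.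
  rewrite /Psi; lra.
have [eps [eps0 c_big]] := c_blowup (L / k).
set b := 1 - Rmin eps (1/2) / 2.
have [b_eps b_half] : 1 - eps < b < 1 /\ 1/2 < b.
  have := Rmin_l eps (1/2); have := Rmin_r eps (1/2).
  by have := Rmin_pos eps (1/2); rewrite /b; lra.
have Psi_b : Psi b < Psi (1/2).
  have := gain_le b ltac:(lra); have := @c_big b ltac:(lra).
  have : L * b / k <= L / k.
    by apply: Rmult_le_compat_r; [exact/Rlt_le/Rinv_0_lt_compat | nra].
  rewrite /Psi; lra.
have Psi_derive y : delta <= y <= b -> derivable_pt_lim Psi y (L * y ^ K.+1 - c' y).
  by move=> y_range; apply: derivable_pt_lim_minus; [apply: poly_derive | apply: c_deriv; lra].
have [p [p_range p_crit]] :=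
  exists_derive0_of_peak (a := delta) (b := b) (z := 1/2) ltac:(lra) Psi_derive Psi_delta Psi_b.
by exists p; split; lra.
Qed.

Lemma exists_sym_deviation_eq K : exists M0, forall M, (M0 <= M)%N ->
  forall N, INR M.+1 <= N -> exists ps qs,
  [/\ 0 < ps < 1, 0 <= qs <= 1 & forall a b, admissible a b ->
      deviation_payoff K M c N ps qs a b <= deviation_payoff K M c N ps qs ps qs].
Proof.
have k0 : 0 < INR K.+2 by apply: lt_0_INR; lia.
have h0 : 0 < (1/2) ^ K.+2 by apply: pow_lt; lra.
have c_half := @c_nonneg (1/2) ltac:(lra).
set Lam := INR K.+2 * c (1/2) / (1/2) ^ K.+2.
have Lam0 : 0 <= Lam by apply: Rdiv_le_0_compat => //; apply: Rmult_le_pos; lra.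
have [M0 roots] := exists_share_root K Lam.
exists M0 => M M_big N N_big.
have [qs [qs_small [foc0 share_big]]] := roots M M_big.
set G := private_share K M qs qs in share_big *.
have M0' : 0 < INR M.+1 by apply: lt_0_INR; lia.
have G0 : 0 < G by apply: (Rmult_lt_reg_l (INR M.+1)); lra.
have L_big : Lam < N * G by have := Rmult_le_compat_r G _ _ (Rlt_le _ _ G0) N_big; lra.
have half_profit : c (1/2) < N * G * (1/2) ^ K.+2 / INR K.+2.
  have -> : c (1/2) = Lam * (1/2) ^ K.+2 / INR K.+2.
    by rewrite /Lam; field; split; apply: Rgt_not_eq.
  rewrite /Rdiv; apply: Rmult_lt_compat_r; first exact: Rinv_0_lt_compat.
  exact: Rmult_lt_compat_r.
have [ps [ps01 ps_foc]] := exists_cost_foc (K := K) (L := N * G) ltac:(lra) half_profit.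
exists ps, qs; split => //; first lra.
move=> a b [a01 b01]; rewrite /deviation_payoff -/G.
have tangent := convex_tangent_le ps01 a01 (c_deriv ps01).
have share_max := private_share_max qs_small foc0 b01.
have psK : 0 <= ps ^ K.+1 by apply: pow_le; lra.
have N0 : 0 <= N by lra.
have : N * (a * ps ^ K.+1 * private_share K M qs b) <= N * (a * ps ^ K.+1 * G).
  by apply: Rmult_le_compat_l => //; apply: Rmult_le_compat_l => //; apply: Rmult_le_pos; lra.
rewrite ps_foc in tangent; nra.
Qed.

End Cost.

Section SymmetricGame.
Variables (K M : nat) (c : R -> R) (ps qs : R).
Local Notation n := (K.+2 + M.+1)%N.
Local Notation N := (INR 'C(K.+2 + M, K.+1)).

Lemma payoff_deviation (i : 'I_n) a b :
  payoff K.+2 c (upd (fun _ => ps) i a) (upd (fun _ => qs) i b) i =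
  deviation_payoff K M c N ps qs a b.
Proof.
rewrite /payoff (@expected_PT_sym K M _ _ i ps qs) => [|j ji|j ji]; last 2 first.
- by rewrite /upd (negbTE ji).
- by rewrite /upd (negbTE ji).
by rewrite /upd eqxx.
Qed.

Lemma payoff_sym (i : 'I_n) :
  payoff K.+2 c (fun _ => ps) (fun _ => qs) i = deviation_payoff K M c N ps qs ps qs.
Proof. by rewrite /payoff (@expected_PT_sym K M _ _ i ps qs). Qed.

Lemma sym_invest_eqP : sym_invest_eq n K.+2 c ps qs <->
  [/\ 0 < ps < 1, 0 <= qs <= 1 & forall a b, admissible a b ->
      deviation_payoff K M c N ps qs a b <= deviation_payoff K M c N ps qs ps qs].
Proof.
have i0 : 'I_n by exists 0%N; rewrite addnS.
split=> [[[adm dev] ps0] | [ps01 qs01 dev]].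
  have [[_ ps1] qs01] := adm i0.
  split=> // a b ab; have := dev i0 a b ab.
  by rewrite payoff_deviation payoff_sym.
split; last lra.
split=> [i | i a b ab]; first by split; lra.
by rewrite payoff_deviation payoff_sym; apply: dev.
Qed.

End SymmetricGame.

Lemma sym_invest_eq_share_max K M c ps qs : c 0 = 0 ->
  (forall x y, 0 <= x -> x < y -> y < 1 -> c x < c y) ->
  sym_invest_eq (K.+2 + M.+1) K.+2 c ps qs ->
  0 < qs < 1 /\ forall b, 0 <= b <= 1 -> private_share K M qs b <= private_share K M qs qs.
Proof.
move=> c0 c_incr /sym_invest_eqP [ps01 qs01 dev].
set N := INR 'C(K.+2 + M, K.+1).
have N0 : 0 < N by apply/lt_0_INR/ltP; rewrite bin_gt0; lia.
have w0 : 0 < N * (ps * ps ^ K.+1).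
  by apply: Rmult_lt_0_compat => //; apply: Rmult_lt_0_compat; [lra | apply: pow_lt; lra].
have share_pos : 0 < private_share K M qs qs.
  have := dev 0 0 (conj (conj (Rle_refl 0) Rlt_0_1) (conj (Rle_refl 0) Rle_0_1)).
  have := c_incr 0 ps (Rle_refl 0) (proj1 ps01) (proj2 ps01).
  rewrite /deviation_payoff -/N c0 => cps.
  have -> : N * (0 * ps ^ K.+1 * private_share K M qs 0) = 0 by ring.
  have -> : N * (ps * ps ^ K.+1 * private_share K M qs qs) =
            N * (ps * ps ^ K.+1) * private_share K M qs qs by ring.
  by move=> le; apply: (Rmult_lt_reg_l _ _ _ w0); lra.
split.
  split; [case: (Rle_lt_or_eq_dec _ _ (proj1 qs01)) => // q0 |
          case: (Rle_lt_or_eq_dec _ _ (proj2 qs01)) => // q1];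
  by move: share_pos; rewrite -?q0 ?q1 ?private_share00 ?private_share11; lra.
move=> b b01; have := dev ps b (conj (conj (Rlt_le _ _ (proj1 ps01)) (proj2 ps01)) b01).
rewrite /deviation_payoff -/N.
have -> : forall x, N * (ps * ps ^ K.+1 * x) = N * (ps * ps ^ K.+1) * x by move=> x; ring.
move=> le; apply: (Rmult_le_reg_l _ _ _ w0); lra.
Qed.

Theorem propositionC1 (k : nat) (c : R -> R) :
  (2 <= k)%coq_nat -> cost_ok c ->
  (exists N : nat, forall n : nat, (N <= n)%coq_nat ->
     exists ps qs : R, sym_invest_eq n k c ps qs) /\
  (forall ps qs : nat -> R,
     (exists N : nat, forall n : nat, (N <= n)%coq_nat -> sym_invest_eq n k c (ps n) (qs n)) ->
     Un_cv (fun n : nat => (iota_rate (qs n) (qs n) * Rpower (INR n) (1 / INR k))%R)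
           (Rpower (INR k - 1) (1 / INR k))).
Proof.
move=> k2 [c0 [c_nonneg [c_incr [c_convex [[c' [c_deriv _]] c_blowup]]]]].
have [K ->] : exists K, k = K.+2 by exists (k - 2)%N; lia.
split.
  have [M0 eqs] := exists_sym_deviation_eq c_deriv c_nonneg c_blowup c_convex K.
  exists (K.+3 + M0)%N => n n_big.
  have -> : n = (K.+2 + (n - K.+3).+1)%N by lia.
  have bin_big : ((n - K.+3).+1 <= 'C(K.+2 + (n - K.+3), K.+1))%N.
    by apply: leq_trans (n_leq_bin _ _) => //; lia.
  have [ps [qs eq]] := eqs (n - K.+3)%N ltac:(lia) _ (le_INR _ _ (elimT leP bin_big)).
  by exists ps, qs; apply/sym_invest_eqP.
move=> ps qs [N eqs]; rewrite /iota_rate.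
apply: (foc_roots_limit (N0 := (K.+3 + N)%N) (leq_addr _ _)) => n n_big.
have n_eq : n = (K.+2 + (n - K.+3).+1)%N by lia.
have := eqs n ltac:(lia); rewrite {1}n_eq => /sym_invest_eq_share_max.
case/(_ c0 c_incr) => qs01 qs_max; split; first by split; nra.
exact: foc_of_share_max.
Qed.
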